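(* Let $\mathbb{K}$ be a field of characteristic zero and let $\mathcal{D}=\{\Delta^{p(1)}_{\beta(1)},\ldots,\Delta^{p(k)}_{\beta(k)}\}$ be a finite set of derivations of $\mathbb{K}[x_1,\ldots,x_n]$ with $p(i)\in\mathbb{Z}^n_{\ge0}\setminus\{0\}$ (positive weight) and $\beta(i)\in\mathbb{K}^n\setminus\{0\}$. Let $\Gamma(\mathcal{D})$ be the directed graph with vertices $1,\ldots,k$ in which there is an edge from $i$ to $j$ if and only if $\beta(i)$ and $\beta(j)$ are not proportional and $\langle\beta(i),p(j)\rangle\neq0$. If the Lie algebra $\mathfrak{g}(\mathcal{D})$ generated by $\mathcal{D}$ is finite dimensional, then $\Gamma(\mathcal{D})$ contains no oriented cycles.
   Context: For $p\in\mathbb{Z}^n_{\ge0}$ and $\beta\in\mathbb{K}^n$, $\Delta^p_\beta:=x_1^{p_1}\cdots x_n^{p_n}\sum_{j=1}^n\beta_jx_j\partial_j$, where $\partial_j=\partial/\partial x_j$; its weight is $\sum_jp_j$. $\langle\beta,u\rangle:=\sum_i\beta_iu_i$. The Lie bracket is the commutator of derivations. *)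

From HB Require Import structures.
From mathcomp Require Import all_boot all_order all_algebra.
From mathcomp Require Import mpoly.
Set Implicit Arguments. Unset Strict Implicit. Unset Printing Implicit Defensive.
Import Order.TTheory GRing.Theory Num.Theory.
Local Open Scope ring_scope.

Section Defs.
Variables (K : fieldType) (n : nat).

Definition op := {mpoly K[n]} -> {mpoly K[n]}.

Definition Delta (p : 'X_{1..n}) (beta : 'rV[K]_n) : op :=
  fun f => 'X_[p] * \sum_(j < n) beta 0 j *: ('X_j * mderiv j f).

Definition lie_bracket (D1 D2 : op) : op := fun f => D1 (D2 f) - D2 (D1 f).

Inductive in_lie_gen (k : nat) (D : 'I_k -> op) : op -> Prop :=
  | lie_gen i : in_lie_gen D (D i)
  | lie_zero : in_lie_gen D (fun _ => 0)
  | lie_add A B : in_lie_gen D A -> in_lie_gen D B -> in_lie_gen D (fun f => A f + B f)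
  | lie_scale (c : K) A : in_lie_gen D A -> in_lie_gen D (fun f => c *: A f)
  | lie_br A B : in_lie_gen D A -> in_lie_gen D B -> in_lie_gen D (lie_bracket A B).

Definition lie_gen_fin_dim (k : nat) (D : 'I_k -> op) : Prop :=
  exists s : seq op, forall A, in_lie_gen D A ->
    exists c : 'I_(size s) -> K,
      forall f, A f = \sum_(i < size s) c i *: (nth (fun g => g) s i) f.

Definition proportional (b1 b2 : 'rV[K]_n) : Prop := exists c : K, b1 = c *: b2.

Definition pairing (b : 'rV[K]_n) (p : 'X_{1..n}) : K :=
  \sum_(l < n) b 0 l * (p l)%:R.

Definition Gamma_edge (k : nat) (p : 'I_k -> 'X_{1..n}) (beta : 'I_k -> 'rV[K]_n)
  (i j : 'I_k) : Prop :=
  ~ proportional (beta i) (beta j) /\ pairing (beta i) (p j) <> 0.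

(* Gamma(D) contains an oriented cycle: vertices i0, c_0, ..., c_(m-1) = i0
   with m >= 1 and an edge between each consecutive pair. *)
Definition has_oriented_cycle (k : nat) (p : 'I_k -> 'X_{1..n})
  (beta : 'I_k -> 'rV[K]_n) : Prop :=
  exists (i0 : 'I_k) (c : seq 'I_k),
    [/\ c != [::], last i0 c = i0 &
        forall t, (t < size c)%N ->
          Gamma_edge p beta (nth i0 (i0 :: c) t) (nth i0 c t)].

End Defs.

From HB Require Import structures.
From mathcomp Require Import all_boot all_order all_algebra.
From mathcomp Require Import mpoly.
From mathcomp Require Import ring zify.
Import GRing.Theory.
Local Open Scope ring_scope.
Set Implicit Arguments. Unset Strict Implicit. Unset Printing Implicit Defensive.

(* Write Delta^p_b = x^p E_b, where E_b = sum_j b_j x_j d_j acts on x^m by the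
   scalar <b, m>; hence [Delta^p_b, Delta^q_g] = Delta^(p+q)_(<b,q> g - <g,p> b).
   Since Delta^q_g x_l = g_l x^(q + e_l), a finite-dimensional g(D) contains
   Delta^q_g with g != 0 only for q of bounded weight.  Along an edge v -> w,
   iterating ad Delta^(p w)_(beta w) on Delta^q_(beta v) gives
   Delta^(q + m p w)_(P_m beta v + B_m beta w): either P_m never vanishes, and
   the weights grow without bound, or at the first zero of P_m the direction
   collapses to a multiple of beta w, nonzero in characteristic 0, of larger
   weight.  Going round the cycle, the weights grow without bound. *)

Section Euler.
Variables (K : fieldType) (n : nat).
Implicit Types (b g : 'rV[K]_n) (f h : {mpoly K[n]}) (m p q : 'X_{1..n}).

Definition euler b f : {mpoly K[n]} := \sum_(j < n) b 0 j *: ('X_j * mderiv j f).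

Lemma euler_is_linear b : linear (euler b).
Proof.
move=> c f h; rewrite /euler scaler_sumr -big_split /=; apply: eq_bigr => j _.
by rewrite mderivD mderivZ mulrDr scalerDr -scalerAr !scalerA mulrC.
Qed.

HB.instance Definition _ b :=
  GRing.isLinear.Build K {mpoly K[n]} {mpoly K[n]} _ (euler b) (euler_is_linear b).

Lemma eulerM b f h : euler b (f * h) = euler b f * h + f * euler b h.
Proof.
rewrite /euler mulr_suml mulr_sumr -big_split /=; apply: eq_bigr => j _.
rewrite mderivM mulrDr scalerDr -scalerAl -scalerAr.
by congr (_ *: _ + _ *: _); [exact: mulrA | exact: mulrCA].
Qed.

Lemma eulerDl b g f : euler (b + g) f = euler b f + euler g f.
Proof.
by rewrite /euler -big_split /=; apply: eq_bigr => j _; rewrite mxE scalerDl.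
Qed.

Lemma eulerZl c b f : euler (c *: b) f = c *: euler b f.
Proof.
by rewrite /euler scaler_sumr; apply: eq_bigr => j _; rewrite mxE scalerA.
Qed.

Lemma pairingBl b g m : pairing (b - g) m = pairing b m - pairing g m.
Proof.
by rewrite /pairing -sumrB; apply: eq_bigr => l _; rewrite !mxE mulrBl.
Qed.

Lemma pairingZl c b m : pairing (c *: b) m = c * pairing b m.
Proof.
by rewrite /pairing mulr_sumr; apply: eq_bigr => l _; rewrite mxE mulrA.
Qed.

Lemma pairingDr b p q : pairing b (p + q)%MM = pairing b p + pairing b q.
Proof.
by rewrite /pairing -big_split /=; apply: eq_bigr => l _; rewrite mnmDE natrD mulrDr.
Qed.

Lemma pairing_mnm1 b l : pairing b U_(l)%MM = b 0 l.
Proof.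
rewrite /pairing (bigD1 l) //= mnm1E eqxx mulr1 big1 ?addr0 // => j /negbTE jl.
by rewrite mnm1E eq_sym jl mulr0.
Qed.

Lemma euler_mpolyX b m : euler b 'X_[m] = pairing b m *: 'X_[m].
Proof.
rewrite /euler /pairing scaler_suml; apply: eq_bigr => j _.
rewrite mderivX -scalerAr -scalerA; case: (posnP (m j)) => [->|mj_gt0].
  by rewrite !scale0r scaler0.
rewrite -mpolyXD addmC submK //; apply/mnm_lepP => l.
by rewrite mnm1E; case: eqP => [<-|].
Qed.

Lemma euler_expand b f :
  euler b f = \sum_(m <- msupp f) (f@_m * pairing b m) *: 'X_[m].
Proof.
rewrite {1}(mpolyE f) linear_sum; apply: eq_bigr => m _.
by rewrite linearZ /= euler_mpolyX scalerA.
Qed.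

Lemma euler_comm b g f : euler b (euler g f) = euler g (euler b f).
Proof.
rewrite (euler_expand g f) (euler_expand b f) !linear_sum; apply: eq_bigr => m _.
by rewrite !linearZ /= !euler_mpolyX !scalerA mulrAC.
Qed.

Lemma DeltaZ q c g f : Delta q (c *: g) f = c *: Delta q g f.
Proof. by rewrite /Delta -/(euler _ _) eulerZl scalerAr. Qed.

Lemma Delta_mpolyXU q g l : Delta q g 'X_l = g 0 l *: 'X_[q + U_(l)].
Proof. by rewrite /Delta -/(euler _ _) euler_mpolyX pairing_mnm1 mpolyXD scalerAr. Qed.

Lemma Delta_bracket p q b g f :
  lie_bracket (Delta p b) (Delta q g) f =
  Delta (p + q) (pairing b q *: g - pairing g p *: b) f.
Proof.
rewrite /lie_bracket /Delta -!/(euler _ _) !eulerM !euler_mpolyX.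
rewrite -scaleNr eulerDl !eulerZl euler_comm mpolyXD -!mul_mpolyC.
ring.
Qed.

End Euler.

Lemma nonproportional_comb_neq0 (K : fieldType) n (g b : 'rV[K]_n) x y :
  ~ proportional g b -> x != 0 -> x *: g - y *: b != 0.
Proof.
move=> gb_nonprop x_neq0; apply/eqP => /eqP; rewrite subr_eq0 => /eqP e.
by apply: gb_nonprop; exists (x^-1 * y); rewrite -scalerA -e scalerA mulVf ?scale1r.
Qed.

Section GeneratedDeltas.
Variables (K : fieldType) (n k : nat) (D : 'I_k -> op K n).
Implicit Types (b g : 'rV[K]_n) (p q : 'X_{1..n}).

Definition lie_Delta q g := exists2 A, in_lie_gen D A & A =1 Delta q g.

Lemma lie_Delta_bracket p q b g :
  lie_Delta p b -> lie_Delta q g ->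
  lie_Delta (p + q) (pairing b q *: g - pairing g p *: b).
Proof.
move=> [A DA eA] [B DB eB]; exists (lie_bracket A B); first exact: lie_br.
by move=> f; rewrite -Delta_bracket /lie_bracket !eB !eA.
Qed.

Lemma lie_DeltaZ c q g : lie_Delta q g -> lie_Delta q (c *: g).
Proof.
move=> [A DA eA]; exists (fun f => c *: A f); first exact: lie_scale.
by move=> f; rewrite DeltaZ eA.
Qed.

Lemma lie_Delta_mdeg_bounded :
  lie_gen_fin_dim D -> exists N, forall q g, lie_Delta q g -> g != 0 -> (mdeg q < N)%N.
Proof.
case=> s span; pose F i l := nth (fun f => f) s i 'X_l.
exists (\max_(l < n) \max_(i < size s) msize (F i l)) => q g [A DA eA] g_neq0.
have [l gl_neq0] : exists l, g 0 l != 0.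
  apply/existsP; apply: contraNT g_neq0; rewrite negb_exists => /forallP g0.
  by apply/eqP/rowP => l; rewrite mxE; apply/eqP/negPn.
have [c Ac] := span A DA.
have Asize : msize (A 'X_l) = (mdeg q).+2.
  by rewrite eA Delta_mpolyXU msizeZ // msizeX mdegD mdeg1 addn1.
apply: leq_trans (leqnSn _) _; rewrite -Asize Ac; apply: leq_trans (msize_sum _ _ _) _.
apply/bigmax_leqP => i _; apply: leq_trans (msizeZ_le _ _) _.
by apply: leq_trans (leq_bigmax l); exact: (leq_bigmax i).
Qed.

Section AdPowers.
Variables (p q : 'X_{1..n}) (b g : 'rV[K]_n).

Definition ad_coef m := pairing b (q + p *+ m).
Definition ad_prod m := \prod_(i < m) ad_coef i.

Lemma ad_prodS m : ad_prod m.+1 = ad_coef m * ad_prod m.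
Proof. by rewrite /ad_prod big_ord_recr mulrC. Qed.

Lemma ad_coefS m : ad_coef m.+1 = ad_coef m + pairing b p.
Proof. by rewrite /ad_coef mulmSr addmA pairingDr. Qed.

Hypotheses (Dpb : lie_Delta p b) (Dqg : lie_Delta q g).

(* m.-1 is truncated at m = 0, where the factor m%:R kills the b-coefficient. *)
Lemma lie_Delta_ad_pow m :
  lie_Delta (q + p *+ m) (ad_prod m *: g - (m%:R * pairing g p * ad_prod m.-1) *: b).
Proof.
elim: m => [|m IH].
  by rewrite mulm0n addm0 /ad_prod big_ord0 scale1r !mul0r scale0r subr0.
rewrite mulmSr addmA addmC.
set gm := (X in lie_Delta _ X) in IH.
suff -> : ad_prod m.+1 *: g - (m.+1%:R * pairing g p * ad_prod m) *: b =
          pairing b (q + p *+ m) *: gm - pairing gm p *: b.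
  exact: lie_Delta_bracket.
rewrite /gm pairingBl !pairingZl scalerBr !scalerA -addrA -opprD -scalerDl.
rewrite -/(ad_coef m) ad_prodS; congr (_ *: _ - _ *: _).
case: m {IH gm} => [|m]; first ring.
rewrite ad_prodS ad_coefS /=; ring.
Qed.

Hypotheses (char0 : [pchar K] =i pred0) (p_neq0 : p != 0%MM).
Hypotheses (gb_nonprop : ~ proportional g b) (gp_neq0 : pairing g p != 0).

Lemma lie_Delta_ad_first_zero m :
  ad_prod m != 0 -> ad_coef m = 0 -> lie_Delta (q + p *+ m.+1) b.
Proof.
move=> Pm_neq0 cm0; set s := m.+1%:R * pairing g p * ad_prod m.
have s_neq0 : s != 0 by rewrite !mulf_neq0 //; move/pcharf0P: char0 => ->.
have := lie_Delta_ad_pow m.+1; rewrite ad_prodS cm0 mul0r scale0r sub0r -scaleNr.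
by move/(lie_DeltaZ (- s)^-1); rewrite scalerA mulVf ?scale1r ?oppr_eq0.
Qed.

Lemma lie_Delta_ad_grow N :
  (exists q' g', [/\ (N <= mdeg q')%N, g' != 0 & lie_Delta q' g']) \/
  exists2 q', (mdeg q < mdeg q')%N & lie_Delta q' b.
Proof.
have mdeg_gt0 : (0 < mdeg p)%N by rewrite lt0n mdeg_eq0.
case: (boolP (ad_prod N == 0)) => [/prodf_eq0 [i _ ci0] | PN_neq0]; [right | left].
  have [m cm0 m_min] := ex_minnP (ex_intro (fun m => ad_coef m == 0) (val i) ci0).
  exists (q + p *+ m.+1)%MM.
    by rewrite mdegD mdegMn -[X in (X < _)%N]addn0 ltn_add2l muln_gt0 mdeg_gt0.
  apply: lie_Delta_ad_first_zero (eqP cm0).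
  by apply/prodf_neq0 => j _; apply/negP => /m_min; rewrite leqNgt ltn_ord.
exists (q + p *+ N)%MM, (ad_prod N *: g - (N%:R * pairing g p * ad_prod N.-1) *: b).
split; last exact: lie_Delta_ad_pow.
  by rewrite mdegD mdegMn; apply: leq_trans (leq_addl _ _); exact: leq_pmull.
exact: nonproportional_comb_neq0.
Qed.

End AdPowers.

Lemma lie_Delta_unbounded (p : 'I_k -> 'X_{1..n}) (beta : 'I_k -> 'rV[K]_n)
    (S : seq 'I_k) v0 :
  [pchar K] =i pred0 -> (forall i, p i != 0%MM) ->
  (forall i, lie_Delta (p i) (beta i)) ->
  (forall v, v \in S -> exists2 w, w \in S & Gamma_edge p beta v w) -> v0 \in S ->
  forall N, exists q g, [/\ (N <= mdeg q)%N, g != 0 & lie_Delta q g].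
Proof.
move=> char0 p_neq0 Dgen succ Sv0 N.
suff: forall r v q, (N <= mdeg q + r)%N -> v \in S -> lie_Delta q (beta v) ->
    exists q g, [/\ (N <= mdeg q)%N, g != 0 & lie_Delta q g].
  by apply; [exact: leq_addl | exact: Sv0 | exact: Dgen].
elim=> [|r IH] v q Nq Sv Dqv; have [w Sw [vw_nonprop vw_pair]] := succ v Sv.
  rewrite addn0 in Nq; exists q, (beta v); split => //.
  apply: contra_notN vw_pair => /eqP ->.
  by rewrite /pairing big1 // => l _; rewrite mxE mul0r.
have [high | [q' qq' Dq'w]] :=
  lie_Delta_ad_grow (Dgen w) Dqv char0 (p_neq0 w) vw_nonprop (introN eqP vw_pair) N.
  exact: high.
by apply: IH Sw Dq'w; lia.
Qed.

End GeneratedDeltas.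

Lemma cycle_mem_succ (T : eqType) (e : T -> T -> Prop) (x0 : T) (c : seq T) :
  last x0 c = x0 -> (forall t, (t < size c)%N -> e (nth x0 (x0 :: c) t) (nth x0 c t)) ->
  forall v, v \in c -> exists2 w, w \in c & e v w.
Proof.
move=> c_last c_edge v vc; have v_idx : (index v c < size c)%N by rewrite index_mem.
case: (ltnP (index v c).+1 (size c)) => [next_idx | last_idx].
  exists (nth x0 c (index v c).+1); first exact: mem_nth.
  by have := c_edge _ next_idx; rewrite /= nth_index.
have -> : v = x0.
  by rewrite -c_last -nth_last -(nth_index x0 vc); congr nth; lia.
have c_gt0 : (0 < size c)%N by lia.
by exists (nth x0 c 0); [exact: mem_nth | exact: (c_edge 0)].
Qed.

Theorem lemma7 (K : fieldType) (n k : nat)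
  (p : 'I_k -> 'X_{1..n}) (beta : 'I_k -> 'rV[K]_n) :
  [pchar K] =i pred0 ->
  (forall i, p i != 0%MM) ->
  (forall i, beta i != 0) ->
  lie_gen_fin_dim (fun i => Delta (p i) (beta i)) ->
  ~ has_oriented_cycle p beta.
Proof.
move=> char0 p_neq0 _ fin_dim [i0 [c [c_neq_nil c_last c_edge]]].
have [N deg_bound] := lie_Delta_mdeg_bounded fin_dim.
have Dgen i : lie_Delta (fun i => Delta (p i) (beta i)) (p i) (beta i).
  by exists (Delta (p i) (beta i)) => //; exact: (lie_gen _ i).
have c_head : nth i0 c 0 \in c by rewrite mem_nth // lt0n size_eq0.
have [q [g [Nq g_neq0 Dqg]]] :=
  lie_Delta_unbounded char0 p_neq0 Dgen (cycle_mem_succ c_last c_edge) c_head N.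
by have := deg_bound q g Dqg g_neq0; rewrite ltnNge Nq.
Qed.
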